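(* Let $G$ be a finitely presented group and $\varphi:G\twoheadrightarrow\mathbb{Z}$ an epimorphism. Then: (1) $\mathrm{grank}(\varphi)=0$ if and only if $[\varphi]\in\Sigma(G)$; (2) $\mathrm{grank}(\varphi)=0$ and $\mathrm{grank}(-\varphi)=0$ if and only if $\ker\varphi$ is finitely generated.
   Context: An associated HNN-extension of $(G,\varphi)$ is a tuple $(B,A,t,\alpha)$ with: - $A\subseteq B\subseteq\ker\varphi$ finitely generated subgroups of $G$; - $\alpha:A\to B$ a monomorphism; - $t\in G$ with $\varphi(t)=1$; - $G=\langle t,B\mid A=t^{-1}\alpha(A)t\rangle$, i.e. $G$ is the HNN extension of $B$ along $\alpha$, meaning $t^{-1}\alpha(a)t=a$ for $a\in A$. For such an extension, $\mathrm{grank}(B,A)$ is the minimal number $k$ of elements $b_1,\dots,b_k$ with $B=\langle b_1,\dots,b_k,A\rangle$. $\mathrm{grank}(\varphi)$ is the minimum of $\mathrm{grank}(B,A)$ over all associated HNN-extensions of $(G,\varphi)$. $S(G)$ is the set of non-trivial homomorphisms $G\to\mathbb{R}$ modulo positive scalars, and $[\varphi]$ is the class of $\varphi$. The Bieri–Neumann–Strebel invariant $\Sigma(G)\subseteq S(G)$ is defined as follows. Fix a finite generating set and its Cayley graph $\mathcal{G}$, with $G$ acting on the left. Extend $\varphi$ linearly over edges to $\tilde\varphi:\mathcal{G}\to\mathbb{R}$. Let $\mathcal{G}_\varphi$ be the maximal subgraph inside $\tilde\varphi^{-1}(-\infty,0]$. Then $[\varphi]\in\Sigma(G)$ iff $\mathcal{G}_\varphi$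 is connected, which is independent of the choices. *)

From Stdlib Require Import ZArith List Relations.
Open Scope Z_scope.

Record Group := {
  carrier :> Type;
  gmul : carrier -> carrier -> carrier;
  gone : carrier;
  ginv : carrier -> carrier;
  gmulA : forall x y z, gmul x (gmul y z) = gmul (gmul x y) z;
  gmul1l : forall x, gmul gone x = x;
  gmulVl : forall x, gmul (ginv x) x = gone
}.

Arguments gmul {g}.
Arguments gone {g}.
Arguments ginv {g}.

Inductive gen {G : Group} (X : G -> Prop) : G -> Prop :=
| gen_base x : X x -> gen X x
| gen_one : gen X gone
| gen_mul x y : gen X x -> gen X y -> gen X (gmul x y)
| gen_inv x : gen X x -> gen X (ginv x).

Definition is_subgroup {G : Group} (P : G -> Prop) : Prop :=
  P gone /\ (forall x y, P x -> P y -> P (gmul x y)) /\ (forall x, P x -> P (ginv x)).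

Definition fg_subgroup {G : Group} (P : G -> Prop) : Prop :=
  is_subgroup P /\ exists l : list G, forall g, P g <-> gen (fun x => In x l) g.

Definition is_hom {G H : Group} (F : G -> H) : Prop :=
  forall a b, F (gmul a b) = gmul (F a) (F b).

Definition is_Zhom {G : Group} (phi : G -> Z) : Prop :=
  forall a b, phi (gmul a b) = phi a + phi b.

Definition epi_Z {G : Group} (phi : G -> Z) : Prop :=
  is_Zhom phi /\ forall z : Z, exists g, phi g = z.

(* words in generators indexed by nat; (i, true) = s_i, (i, false) = s_i^-1 *)
Definition word := list (nat * bool).

Fixpoint eval_word {H : Group} (x : nat -> H) (w : word) : H :=
  match w with
  | nil => gone
  | (i, b) :: w' => gmul (if b then x i else ginv (x i)) (eval_word x w')
  end.

(* G = < s_0, ..., s_{n-1} | rels >, as a universal property *)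
Definition finitely_presented (G : Group) : Prop :=
  exists (n : nat) (s : nat -> G) (rels : list word),
    (forall r, In r rels -> forall i b, In (i, b) r -> (i < n)%nat) /\
    (forall g, gen (fun x => exists i, (i < n)%nat /\ x = s i) g) /\
    (forall r, In r rels -> eval_word s r = gone) /\
    (forall (H : Group) (x : nat -> H),
        (forall r, In r rels -> eval_word x r = gone) ->
        exists F : G -> H, is_hom F /\ forall i, (i < n)%nat -> F (s i) = x i) /\
    (forall (H : Group) (F1 F2 : G -> H), is_hom F1 -> is_hom F2 ->
        (forall i, (i < n)%nat -> F1 (s i) = F2 (s i)) -> forall g, F1 g = F2 g).

Definition assoc_HNN {G : Group} (phi : G -> Z)
    (B A : G -> Prop) (t : G) (alpha : G -> G) : Prop :=
  fg_subgroup B /\ fg_subgroup A /\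
  (forall a, A a -> B a) /\ (forall b, B b -> phi b = 0) /\
  (forall a, A a -> B (alpha a)) /\
  (forall a b, A a -> A b -> alpha (gmul a b) = gmul (alpha a) (alpha b)) /\
  (forall a b, A a -> A b -> alpha a = alpha b -> a = b) /\
  phi t = 1 /\
  (forall a, A a -> gmul (gmul (ginv t) (alpha a)) t = a) /\
  (forall g, gen (fun x => B x \/ x = t) g) /\
  (* universal property of the HNN extension <t, B | t^-1 alpha(a) t = a> *)
  (forall (H : Group) (f : G -> H) (h : H),
      (forall b c, B b -> B c -> f (gmul b c) = gmul (f b) (f c)) ->
      (forall a, A a -> gmul (gmul (ginv h) (f (alpha a))) h = f a) ->
      (exists F : G -> H, is_hom F /\ (forall b, B b -> F b = f b) /\ F t = h) /\
      (forall F1 F2 : G -> H, is_hom F1 -> is_hom F2 ->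
         (forall b, B b -> F1 b = F2 b) -> F1 t = F2 t -> forall g, F1 g = F2 g)).

Definition grank_BA_is {G : Group} (B A : G -> Prop) (k : nat) : Prop :=
  (exists l : list G, length l = k /\
     forall g, B g <-> gen (fun x => In x l \/ A x) g) /\
  (forall l : list G, (forall g, B g <-> gen (fun x => In x l \/ A x) g) ->
     (k <= length l)%nat).

Definition grank_is {G : Group} (phi : G -> Z) (k : nat) : Prop :=
  (exists B A t alpha, assoc_HNN phi B A t alpha /\ grank_BA_is B A k) /\
  (forall B A t alpha k', assoc_HNN phi B A t alpha -> grank_BA_is B A k' ->
     (k <= k')%nat).

(* One step in the Cayley graph (w.r.t. generating list S, left action):
   g -- g s for s in S; the edge lies in the maximal subgraph of
   phi~^-1(-oo,0] iff both endpoints have phi <= 0 (phi~ is affine on edges). *)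
Definition neg_step {G : Group} (S : list G) (phi : G -> Z) (g h : G) : Prop :=
  phi g <= 0 /\ phi h <= 0 /\
  exists s, In s S /\ (h = gmul g s \/ g = gmul h s).

Definition cayley_neg_connected {G : Group} (S : list G) (phi : G -> Z) : Prop :=
  forall g h, phi g <= 0 -> phi h <= 0 ->
    clos_refl_trans G (neg_step S phi) g h.

(* [phi] in Sigma(G): G_phi is connected, for the Cayley graph of a finite
   generating set (independent of the choice; we quantify over all). *)
Definition in_Sigma {G : Group} (phi : G -> Z) : Prop :=
  forall S : list G, (forall g, gen (fun x => In x S) g) ->
    cayley_neg_connected S phi.

From Stdlib Require Import ZArith List Relations Lia Classical ClassicalEpsilon.
Open Scope Z_scope.

(* grank(phi) = 0 says precisely that G is an ascending HNN-extension: G = <B, t>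
   with B finitely generated inside ker phi, phi t = 1 and t B t^-1 <= B.  Every
   element then has a normal form t^-p b t^q, which gives the universal property
   of the HNN-extension, and walking along normal forms shows that any two
   vertices of height <= 0 of a Cayley graph are joined below height 0.
   Conversely, for generators t, l_1, ..., l_m with l_i in ker phi, a path from 1
   to t l_i t^-1 in the negative half of the Cayley graph lifts to an expression
   of t l_i t^-1 in the conjugates t^-j l t^j, j <= K; these conjugates generate
   the base group B.  Finally ker phi is the union of the t^-p B t^p, so it is B
   as soon as also t^-1 B t <= B, which Sigma for -phi provides by the same
   argument with t^-1 in place of t. *)

Infix "⋅" := gmul (at level 40, left associativity).

Section GroupLaws.
Context {G : Group}.
Implicit Types x y z : G.

Lemma mulVr x : x ⋅ ginv x = gone.
Proof.
  rewrite <- (gmul1l _ (x ⋅ ginv x)), <- (gmulVl _ (ginv x)) at 1.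
  rewrite <- gmulA, (gmulA _ (ginv x) x (ginv x)), gmulVl, gmul1l.
  apply gmulVl.
Qed.

Lemma mul1r x : x ⋅ gone = x.
Proof. rewrite <- (gmulVl _ x), gmulA, mulVr, gmul1l. reflexivity. Qed.

Lemma mulKl x y : ginv x ⋅ (x ⋅ y) = y.
Proof. rewrite gmulA, gmulVl, gmul1l. reflexivity. Qed.

Lemma mulKr x y : x ⋅ (ginv x ⋅ y) = y.
Proof. rewrite gmulA, mulVr, gmul1l. reflexivity. Qed.

Lemma mul_cancel_l x y z : x ⋅ y = x ⋅ z -> y = z.
Proof. intro E. rewrite <- (mulKl x y), E, mulKl. reflexivity. Qed.

Lemma mul_cancel_r x y z : y ⋅ x = z ⋅ x -> y = z.
Proof.
  intro E. rewrite <- (mul1r y), <- (mulVr x), gmulA, E, <- gmulA, mulVr, mul1r.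
  reflexivity.
Qed.

Lemma inv_uniq x y : x ⋅ y = gone -> y = ginv x.
Proof. intro E. apply (mul_cancel_l x). rewrite E, mulVr. reflexivity. Qed.

Lemma ginvK x : ginv (ginv x) = x.
Proof. symmetry. apply inv_uniq, gmulVl. Qed.

Lemma ginv_mul x y : ginv (x ⋅ y) = ginv y ⋅ ginv x.
Proof.
  symmetry. apply inv_uniq.
  rewrite <- gmulA, (gmulA _ y), mulVr, gmul1l, mulVr. reflexivity.
Qed.

Lemma ginv1 : ginv (@gone G) = gone.
Proof. symmetry. apply inv_uniq, gmul1l. Qed.

End GroupLaws.

Hint Rewrite <- gmulA : grp.
Hint Rewrite gmul1l @mul1r gmulVl @mulVr @mulKl @mulKr @ginvK @ginv_mul @ginv1 : grp.
Ltac gsimpl := autorewrite with grp; try reflexivity.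

Fixpoint gexp {G : Group} (u : G) (n : nat) : G :=
  match n with O => gone | S n => gexp u n ⋅ u end.

Definition gzexp {G : Group} (u : G) (z : Z) : G :=
  match z with
  | Z0 => gone
  | Zpos p => gexp u (Pos.to_nat p)
  | Zneg p => ginv (gexp u (Pos.to_nat p))
  end.

Section Powers.
Context {G : Group}.
Implicit Types u : G.

Lemma gexpD u m n : gexp u (m + n) = gexp u m ⋅ gexp u n.
Proof.
  induction n as [|n IH]; cbn [gexp].
  - rewrite Nat.add_0_r. gsimpl.
  - rewrite <- plus_n_Sm. cbn [gexp]. rewrite IH. gsimpl.
Qed.

Lemma gexpSl u n : gexp u (S n) = u ⋅ gexp u n.
Proof. change (S n) with (1 + n)%nat. rewrite gexpD. cbn [gexp]. gsimpl. Qed.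

Lemma gexpV u n : gexp (ginv u) n = ginv (gexp u n).
Proof.
  induction n as [|n IH]; [cbn [gexp]; gsimpl|].
  change (gexp (ginv u) (S n)) with (gexp (ginv u) n ⋅ ginv u).
  rewrite IH, gexpSl. gsimpl.
Qed.

Lemma gexp_gen u n : gen (fun x => x = u) (gexp u n).
Proof.
  induction n; cbn [gexp]; [apply gen_one|apply gen_mul; [assumption|now apply gen_base]].
Qed.

Lemma gzexp_gen u z : gen (fun x => x = u) (gzexp u z).
Proof. destruct z; cbn; [apply gen_one|apply gexp_gen|apply gen_inv, gexp_gen]. Qed.

Variable phi : G -> Z.
Hypothesis phi_hom : is_Zhom phi.

Lemma zhom1 : phi gone = 0.
Proof. pose proof (phi_hom gone gone) as E. rewrite gmul1l in E. lia. Qed.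

Lemma zhomV x : phi (ginv x) = - phi x.
Proof. pose proof (phi_hom (ginv x) x) as E. rewrite gmulVl, zhom1 in E. lia. Qed.

Lemma zhom_gexp u n : phi (gexp u n) = Z.of_nat n * phi u.
Proof.
  induction n as [|n IH]; cbn [gexp].
  - apply zhom1.
  - rewrite phi_hom, IH, Nat2Z.inj_succ. lia.
Qed.

Lemma zhom_gzexp u z : phi (gzexp u z) = z * phi u.
Proof.
  destruct z as [|p|p]; cbn [gzexp].
  - apply zhom1.
  - rewrite zhom_gexp, positive_nat_Z. reflexivity.
  - rewrite zhomV, zhom_gexp, positive_nat_Z. lia.
Qed.

Lemma ker_subgroup : is_subgroup (fun g => phi g = 0).
Proof.
  split; [apply zhom1|split].
  - intros x y Hx Hy. rewrite phi_hom. lia.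
  - intros x Hx. rewrite zhomV. lia.
Qed.

End Powers.

Section Generation.
Context {G : Group}.

Lemma hom1 {H : Group} (F : G -> H) : is_hom F -> F gone = gone.
Proof.
  intro F_hom. apply (mul_cancel_l (F gone)). rewrite <- F_hom, gmul1l, mul1r.
  reflexivity.
Qed.

Lemma homV {H : Group} (F : G -> H) x : is_hom F -> F (ginv x) = ginv (F x).
Proof. intro F_hom. apply inv_uniq. rewrite <- F_hom, mulVr. apply hom1, F_hom. Qed.

Lemma conj_hom (c : G) : is_hom (fun x => c ⋅ x ⋅ ginv c).
Proof. intros a b. gsimpl. Qed.

Lemma gen_mono (X Y : G -> Prop) :
  (forall x, X x -> Y x) -> forall g, gen X g -> gen Y g.
Proof.
  intros XY g Hg.
  induction Hg; [apply gen_base|apply gen_one|apply gen_mul|apply gen_inv]; auto.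
Qed.

Lemma gen_ext (X Y : G -> Prop) : (forall x, X x <-> Y x) -> forall g, gen X g <-> gen Y g.
Proof. intros XY g. split; apply gen_mono; firstorder. Qed.

Lemma gen_is_subgroup (X : G -> Prop) : is_subgroup (gen X).
Proof. split; [apply gen_one|split; [apply gen_mul|apply gen_inv]]. Qed.

Lemma gen_hom_closed (F : G -> G) (X P : G -> Prop) :
  is_hom F -> is_subgroup P -> (forall x, X x -> P (F x)) ->
  forall g, gen X g -> P (F g).
Proof.
  intros F_hom [P1 [Pmul Pinv]] XP g Hg.
  induction Hg; auto.
  - rewrite hom1; auto.
  - rewrite F_hom; auto.
  - rewrite homV; auto.
Qed.

Lemma gen_min (X P : G -> Prop) :
  is_subgroup P -> (forall x, X x -> P x) -> forall g, gen X g -> P g.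
Proof. intros P_sub XP. apply (gen_hom_closed (fun x => x)); auto. now intros a b. Qed.

Lemma hom_ext_gen {H : Group} (X : G -> Prop) (F1 F2 : G -> H) :
  (forall g, gen X g) -> is_hom F1 -> is_hom F2 ->
  (forall x, X x -> F1 x = F2 x) -> forall g, F1 g = F2 g.
Proof.
  intros X_gen F1_hom F2_hom F12 g.
  induction (X_gen g) as [x Hx| |x y _ IH1 _ IH2|x _ IH].
  - auto.
  - rewrite !hom1; auto.
  - rewrite F1_hom, F2_hom, IH1, IH2. reflexivity.
  - rewrite homV, (homV F2), IH; auto.
Qed.

Lemma fg_subgroup_ext (P Q : G -> Prop) :
  (forall g, P g <-> Q g) -> fg_subgroup P -> fg_subgroup Q.
Proof.
  intros PQ [[P1 [Pmul Pinv]] [l Pl]]. split; [split; [|split]|exists l]; firstorder.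
Qed.

Lemma conj_gexp_closed (P : G -> Prop) (c : G) :
  (forall b, P b -> P (c ⋅ b ⋅ ginv c)) ->
  forall r b, P b -> P (gexp c r ⋅ b ⋅ ginv (gexp c r)).
Proof.
  intros P_conj r b Pb. induction r as [|r IH].
  - cbn [gexp]. replace (gone ⋅ b ⋅ ginv gone) with b by gsimpl. exact Pb.
  - rewrite gexpSl.
    replace (c ⋅ gexp c r ⋅ b ⋅ ginv (c ⋅ gexp c r))
      with (c ⋅ (gexp c r ⋅ b ⋅ ginv (gexp c r)) ⋅ ginv c) by gsimpl.
    auto.
Qed.

End Generation.

Lemma list_uniform_index {T : Type} (P : nat -> T -> Prop) :
  (forall K K' y, (K <= K')%nat -> P K y -> P K' y) ->
  forall L : list T, (forall y, In y L -> exists K, P K y) ->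
  exists K, forall y, In y L -> P K y.
Proof.
  intros P_mono L. induction L as [|a L IH]; intros HL.
  - exists 0%nat. intros y [].
  - destruct (HL a (or_introl eq_refl)) as [K1 H1].
    destruct IH as [K2 H2]; [intros y Hy; apply HL; now right|].
    exists (Nat.max K1 K2). intros y [<-|Hy].
    + apply (P_mono K1); auto; lia.
    + apply (P_mono K2); auto; lia.
Qed.

Definition nf {G : Group} (t : G) (p : nat) (b : G) (q : nat) : G :=
  ginv (gexp t p) ⋅ b ⋅ gexp t q.

(* The associated HNN-extensions with grank(B, A) = 0: then A = B and alpha is
   conjugation by t. *)
Record ascending_HNN {G : Group} (phi : G -> Z) (B : G -> Prop) (t : G) : Prop := {
  asc_fg : fg_subgroup B;
  asc_ker : forall b, B b -> phi b = 0;
  asc_t : phi t = 1;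
  asc_conj : forall b, B b -> B (t ⋅ b ⋅ ginv t);
  asc_gen : forall g, gen (fun x => B x \/ x = t) g }.

Section NormalFormProduct.
Context {G : Group} (t : G).

Lemma nf_mul_le p b q p' b' q' : (p' <= q)%nat ->
  nf t p b q ⋅ nf t p' b' q' =
  nf t p (b ⋅ (gexp t (q - p') ⋅ b' ⋅ ginv (gexp t (q - p')))) (q - p' + q').
Proof.
  intro Hle. unfold nf. replace q with (q - p' + p')%nat at 1 by lia.
  rewrite !gexpD. gsimpl.
Qed.

Lemma nf_mul_gt p b q p' b' q' : (q < p')%nat ->
  nf t p b q ⋅ nf t p' b' q' =
  nf t (p' - q + p) (gexp t (p' - q) ⋅ b ⋅ ginv (gexp t (p' - q)) ⋅ b') q'.
Proof.
  intro Hlt. unfold nf. replace p' with (p' - q + q)%nat at 1 by lia.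
  rewrite !gexpD. gsimpl.
Qed.

End NormalFormProduct.

Section NormalForm.
Context {G : Group} (t : G) (B : G -> Prop).
Hypothesis B_subgroup : is_subgroup B.
Hypothesis B_conj : forall b, B b -> B (t ⋅ b ⋅ ginv t).
Hypothesis B_t_gen : forall g, gen (fun x => B x \/ x = t) g.

Lemma normal_form g : exists p b q, B b /\ g = nf t p b q.
Proof.
  pose proof B_subgroup as [B1 [Bmul _]].
  pose proof (conj_gexp_closed B t B_conj) as B_conj_gexp.
  induction (B_t_gen g) as [x [Hx| ->]| |x y _ [p [b [q [Hb ->]]]] _ [p' [b' [q' [Hb' ->]]]]
                          |x _ [p [b [q [Hb ->]]]]]; unfold nf.
  - exists 0%nat, x, 0%nat. split; [exact Hx|]. cbn; gsimpl.
  - exists 0%nat, gone, 1%nat. split; [exact B1|]. cbn; gsimpl.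
  - exists 0%nat, gone, 0%nat. split; [exact B1|]. cbn; gsimpl.
  - fold (nf t p b q) (nf t p' b' q').
    destruct (le_lt_dec p' q) as [Hle|Hlt].
    + rewrite nf_mul_le by exact Hle. do 3 eexists. split; [|reflexivity]. auto.
    + rewrite nf_mul_gt by exact Hlt. do 3 eexists. split; [|reflexivity]. auto.
  - exists q, (ginv b), p. split; [now apply B_subgroup|]. gsimpl.
Qed.

Variable phi : G -> Z.
Hypothesis phi_hom : is_Zhom phi.
Hypothesis phi_t : phi t = 1.
Hypothesis B_ker : forall b, B b -> phi b = 0.

Lemma zhom_nf p b q : B b -> phi (nf t p b q) = Z.of_nat q - Z.of_nat p.
Proof.
  intro Hb. unfold nf.
  rewrite !phi_hom, (zhomV _ phi_hom), !(zhom_gexp _ phi_hom), phi_t, (B_ker b Hb).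
  lia.
Qed.

Section Lift.
Context {H : Group} (f : G -> H) (h : H).
Hypothesis f_mul : forall b c, B b -> B c -> f (b ⋅ c) = f b ⋅ f c.
Hypothesis f_rel : forall a, B a -> ginv h ⋅ f (t ⋅ a ⋅ ginv t) ⋅ h = f a.

Lemma f_conj a : B a -> f (t ⋅ a ⋅ ginv t) = h ⋅ f a ⋅ ginv h.
Proof. intro Ha. rewrite <- (f_rel a Ha). gsimpl. Qed.

Lemma f_conj_gexp r b : B b ->
  f (gexp t r ⋅ b ⋅ ginv (gexp t r)) = gexp h r ⋅ f b ⋅ ginv (gexp h r).
Proof.
  intro Hb. induction r as [|r IH].
  - cbn [gexp]. replace (gone ⋅ b ⋅ ginv gone) with b by gsimpl. gsimpl.
  - rewrite !gexpSl.
    replace (t ⋅ gexp t r ⋅ b ⋅ ginv (t ⋅ gexp t r))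
      with (t ⋅ (gexp t r ⋅ b ⋅ ginv (gexp t r)) ⋅ ginv t) by gsimpl.
    rewrite f_conj, IH by exact (conj_gexp_closed B t B_conj r b Hb). gsimpl.
Qed.

(* Two normal forms of the same element differ by a common power of t
   (compare heights) and a conjugation of the B-part. *)
Lemma nf_lift_wd_le p b q p' b' q' : B b -> B b' -> (p <= p')%nat ->
  nf t p b q = nf t p' b' q' -> nf h p (f b) q = nf h p' (f b') q'.
Proof.
  intros Hb Hb' Hle E.
  assert (Hpq : Z.of_nat q - Z.of_nat p = Z.of_nat q' - Z.of_nat p')
    by (rewrite <- (zhom_nf p b q Hb), <- (zhom_nf p' b' q' Hb'), E; reflexivity).
  destruct (Nat.le_exists_sub p p' Hle) as [r [-> _]].
  replace q' with (r + q)%nat in * by lia.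
  assert (Eb' : b' = gexp t r ⋅ b ⋅ ginv (gexp t r)).
  { assert (Eb : b = ginv (gexp t r) ⋅ b' ⋅ gexp t r).
    { apply (mul_cancel_l (ginv (gexp t p))), (mul_cancel_r (gexp t q)).
      unfold nf in E. rewrite E, !gexpD. gsimpl. }
    rewrite Eb. gsimpl. }
  subst b'. unfold nf. rewrite f_conj_gexp, !gexpD by exact Hb. gsimpl.
Qed.

Lemma nf_lift_wd p b q p' b' q' : B b -> B b' ->
  nf t p b q = nf t p' b' q' -> nf h p (f b) q = nf h p' (f b') q'.
Proof.
  intros Hb Hb' E. destruct (le_lt_dec p p').
  - apply nf_lift_wd_le; auto.
  - symmetry. apply nf_lift_wd_le; auto. lia.
Qed.

Lemma normal_form_sig g : {x : nat * G * nat | B (snd (fst x)) /\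
  g = nf t (fst (fst x)) (snd (fst x)) (snd x)}.
Proof.
  apply constructive_indefinite_description.
  destruct (normal_form g) as [p [b [q [Hb E]]]]. now exists (p, b, q).
Qed.

Definition hnn_lift (g : G) : H :=
  let '(p, b, q) := proj1_sig (normal_form_sig g) in nf h p (f b) q.

Lemma hnn_lift_nf p b q : B b -> hnn_lift (nf t p b q) = nf h p (f b) q.
Proof.
  intro Hb. unfold hnn_lift.
  destruct (normal_form_sig (nf t p b q)) as [[[p0 b0] q0] [Hb0 E0]].
  apply nf_lift_wd; auto.
Qed.

Lemma hnn_lift_hom : is_hom hnn_lift.
Proof.
  pose proof B_subgroup as [_ [Bmul _]].
  pose proof (conj_gexp_closed B t B_conj) as B_conj_gexp.
  intros g g'.
  destruct (normal_form g) as [p [b [q [Hb ->]]]].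
  destruct (normal_form g') as [p' [b' [q' [Hb' ->]]]].
  rewrite !hnn_lift_nf by assumption.
  destruct (le_lt_dec p' q) as [Hle|Hlt].
  - rewrite nf_mul_le, hnn_lift_nf, nf_mul_le, f_mul, f_conj_gexp by auto.
    reflexivity.
  - rewrite nf_mul_gt, hnn_lift_nf, nf_mul_gt, f_mul, f_conj_gexp by auto.
    reflexivity.
Qed.

Lemma hnn_lift_B b : B b -> hnn_lift b = f b.
Proof.
  intro Hb. replace b with (nf t 0 b 0) at 1 by (unfold nf; cbn; gsimpl).
  rewrite hnn_lift_nf by exact Hb. unfold nf. cbn. gsimpl.
Qed.

Lemma hnn_lift_t : hnn_lift t = h.
Proof.
  pose proof B_subgroup as [B1 _].
  assert (f1 : f gone = gone)
    by (apply (mul_cancel_l (f gone)); rewrite <- f_mul by exact B1; gsimpl).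
  replace t with (nf t 0 gone 1) at 1 by (unfold nf; cbn; gsimpl).
  rewrite hnn_lift_nf, f1 by exact B1. unfold nf. cbn. gsimpl.
Qed.

End Lift.

Lemma ascending_assoc_HNN :
  fg_subgroup B -> assoc_HNN phi B B t (fun b => t ⋅ b ⋅ ginv t).
Proof.
  intro B_fg.
  split; [exact B_fg|]. split; [exact B_fg|]. split; [auto|].
  split; [exact B_ker|]. split; [exact B_conj|].
  split; [intros a b _ _; gsimpl|].
  split; [intros a b _ _ E; now apply mul_cancel_r, mul_cancel_l in E|].
  split; [exact phi_t|]. split; [intros a _; gsimpl|]. split; [exact B_t_gen|].
  intros H f h f_mul f_rel. split.
  - exists (hnn_lift f h). split; [|split].
    + apply hnn_lift_hom; assumption.
    + intros b Hb. apply hnn_lift_B; assumption.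
    + apply hnn_lift_t; assumption.
  - intros F1 F2 F1_hom F2_hom F12 Ft.
    apply (hom_ext_gen _ F1 F2 B_t_gen F1_hom F2_hom). intros x [Hx| ->]; auto.
Qed.

End NormalForm.

Lemma grank0_of_ascending {G : Group} (phi : G -> Z) B t :
  is_Zhom phi -> ascending_HNN phi B t -> grank_is phi 0.
Proof.
  intros phi_hom [B_fg B_ker phi_t B_conj B_gen].
  assert (B_sub : is_subgroup B) by apply B_fg.
  split; [|intros; lia].
  exists B, B, t, (fun b => t ⋅ b ⋅ ginv t).
  split; [now apply ascending_assoc_HNN|split; [|intros; lia]].
  exists nil. split; [reflexivity|]. intro g. split.
  - intro Hg. now apply gen_base; right.
  - apply gen_min; [exact B_sub|]. intros x [[]|Hx]; exact Hx.
Qed.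

Lemma ascending_of_grank0 {G : Group} (phi : G -> Z) :
  grank_is phi 0 -> exists B t, ascending_HNN phi B t.
Proof.
  intros [[B [A [t [alpha [HNN [[l [Hl BA]] _]]]]]] _].
  destruct HNN as (_ & A_fg & AB & B_ker & alpha_B & _ & _ & phi_t & rel & BT_gen & _).
  destruct l; [|discriminate].
  assert (B_A : forall g, B g -> A g).
  { intros g Hg. apply BA in Hg. revert Hg. apply gen_min; [apply A_fg|].
    intros x [[]|Hx]; exact Hx. }
  exists A, t. split; auto.
  - intros a Ha.
    replace (t ⋅ a ⋅ ginv t) with (alpha a) by (rewrite <- (rel a Ha) at 2; gsimpl).
    auto.
  - intro g. generalize (BT_gen g). apply gen_mono. intros x [Hx|Hx]; auto.
Qed.

Section NegativeHalf.
Context {G : Group} (psi : G -> Z) (gens : list G).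
Hypothesis psi_hom : is_Zhom psi.
Hypothesis gens_gen : forall g, gen (fun x => In x gens) g.

Notation C := (clos_refl_trans G (neg_step gens psi)).

Lemma neg_conn_sym x y : C x y -> C y x.
Proof.
  intro Cxy. induction Cxy as [x y [Hx [Hy [s [Hs E]]]]|x|x y z _ IH1 _ IH2].
  - apply rt_step. repeat split; auto. exists s. split; [exact Hs|]. tauto.
  - apply rt_refl.
  - eapply rt_trans; eauto.
Qed.

Lemma neg_conn_mul z : exists d : nat, forall g, psi g <= - Z.of_nat d -> C g (g ⋅ z).
Proof.
  induction (gens_gen z) as [s Hs| |x y _ [dx IHx] _ [dy IHy]|x _ [dx IHx]].
  - exists (Z.to_nat (Z.abs (psi s))). intros g Hg. apply rt_step.
    repeat split; [lia|rewrite psi_hom; lia|]. exists s. auto.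
  - exists 0%nat. intros g _. rewrite mul1r. apply rt_refl.
  - exists (dx + dy + Z.to_nat (Z.abs (psi x)))%nat. intros g Hg.
    apply (rt_trans _ _ _ (g ⋅ x)); [apply IHx; lia|].
    rewrite gmulA. apply IHy. rewrite psi_hom. lia.
  - exists (dx + Z.to_nat (Z.abs (psi x)))%nat. intros g Hg.
    apply neg_conn_sym. replace g with (g ⋅ ginv x ⋅ x) at 2 by gsimpl.
    apply IHx. rewrite psi_hom, (zhomV _ psi_hom). lia.
Qed.

Lemma neg_conn_mul_list (L : list G) :
  exists d : nat, forall z, In z L -> forall g, psi g <= - Z.of_nat d -> C g (g ⋅ z).
Proof.
  apply (list_uniform_index (fun d z => forall g, psi g <= - Z.of_nat d -> C g (g ⋅ z))).
  - intros d d' z Hdd' Hz g Hg. apply Hz. lia.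
  - intros z _. apply neg_conn_mul.
Qed.

Variable d : nat.

Lemma neg_conn_mul_ker (L : list G) :
  (forall z, In z L -> psi z = 0) ->
  (forall z, In z L -> forall g, psi g <= - Z.of_nat d -> C g (g ⋅ z)) ->
  forall a, gen (fun x => In x L) a -> forall g, psi g <= - Z.of_nat d -> C g (g ⋅ a).
Proof.
  intros L_ker L_conn a Ha.
  assert (a_ker : forall a, gen (fun x => In x L) a -> psi a = 0)
    by (apply gen_min; [apply ker_subgroup, psi_hom|exact L_ker]).
  induction Ha as [x Hx| |x y Hx IH1 Hy IH2|x Hx IH]; intros g Hg.
  - auto.
  - rewrite mul1r. apply rt_refl.
  - apply (rt_trans _ _ _ (g ⋅ x)); [auto|].
    rewrite gmulA. apply IH2. rewrite psi_hom, (a_ker x Hx). lia.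
  - apply neg_conn_sym. replace g with (g ⋅ ginv x ⋅ x) at 2 by gsimpl.
    apply IH. rewrite psi_hom, (zhomV _ psi_hom), (a_ker x Hx). lia.
Qed.

Variable u : G.
Hypothesis psi_u : psi u = 1.

Lemma neg_generator_exists : exists s, In s gens /\ psi s <> 0.
Proof.
  apply NNPP. intro no_gen.
  assert (all_ker : forall g, gen (fun x => In x gens) g -> psi g = 0).
  { apply gen_min; [apply ker_subgroup, psi_hom|].
    intros x Hx. apply NNPP. intro Hx'. apply no_gen. now exists x. }
  specialize (all_ker u (gens_gen u)). lia.
Qed.

Lemma neg_conn_descend n g : psi g <= 0 ->
  exists g', psi g' <= - Z.of_nat n /\ C g g'.
Proof.
  intro Hg. destruct neg_generator_exists as [s [Hs Hs0]].
  induction n as [|n [g' [Hg' Cgg']]].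
  - exists g. split; [lia|apply rt_refl].
  - destruct (Z_lt_le_dec (psi s) 0).
    + exists (g' ⋅ s). split; [rewrite psi_hom; lia|].
      apply (rt_trans _ _ _ g'); [exact Cgg'|]. apply rt_step.
      repeat split; [lia|rewrite psi_hom; lia|]. exists s. auto.
    + exists (g' ⋅ ginv s). split; [rewrite psi_hom, (zhomV _ psi_hom); lia|].
      apply (rt_trans _ _ _ g'); [exact Cgg'|]. apply rt_step.
      repeat split; [lia|rewrite psi_hom, (zhomV _ psi_hom); lia|].
      exists s. split; [exact Hs|]. right. gsimpl.
Qed.

Hypothesis u_conn : forall g, psi g <= - Z.of_nat d -> C g (g ⋅ u).
Hypothesis uV_conn : forall g, psi g <= - Z.of_nat d -> C g (g ⋅ ginv u).

Lemma neg_conn_gexp q g : psi g + Z.of_nat q <= - Z.of_nat d -> C g (g ⋅ gexp u q).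
Proof.
  revert g. induction q as [|q IH]; intros g Hg.
  - cbn [gexp]. rewrite mul1r. apply rt_refl.
  - apply (rt_trans _ _ _ (g ⋅ u)); [apply u_conn; lia|].
    rewrite gexpSl, gmulA. apply IH. rewrite psi_hom. lia.
Qed.

Lemma neg_conn_gexpV p g : psi g <= - Z.of_nat d -> C g (g ⋅ ginv (gexp u p)).
Proof.
  revert g. induction p as [|p IH]; intros g Hg.
  - cbn [gexp]. rewrite ginv1, mul1r. apply rt_refl.
  - apply (rt_trans _ _ _ (g ⋅ ginv u)); [auto|].
    replace (g ⋅ ginv (gexp u (S p))) with (g ⋅ ginv u ⋅ ginv (gexp u p))
      by (cbn [gexp]; gsimpl).
    apply IH. rewrite psi_hom, (zhomV _ psi_hom). lia.
Qed.

End NegativeHalf.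

Lemma ascending_normal_form {G : Group} (phi : G -> Z) B t :
  ascending_HNN phi B t -> forall g, exists p b q, B b /\ g = nf t p b q.
Proof. intros [[B_sub _] _ _ B_conj B_gen]. exact (normal_form t B B_sub B_conj B_gen). Qed.

Lemma ascending_in_Sigma {G : Group} (psi : G -> Z) A t :
  is_Zhom psi -> ascending_HNN psi A t -> in_Sigma psi.
Proof.
  intros psi_hom asc gens gens_gen x y Hx Hy.
  pose proof asc as [[A_sub [LA A_LA]] A_ker psi_t A_conj A_gen].
  destruct (neg_conn_mul_list psi gens psi_hom gens_gen (t :: ginv t :: LA)) as [d Hd].
  assert (A_conn : forall a, A a -> forall g, psi g <= - Z.of_nat d ->
                     clos_refl_trans G (neg_step gens psi) g (g ⋅ a)).
  { intros a Ha. apply (neg_conn_mul_ker psi gens psi_hom d LA).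
    - intros z Hz. apply A_ker, A_LA, gen_base, Hz.
    - intros z Hz. apply Hd. now right; right.
    - apply A_LA, Ha. }
  destruct (neg_conn_descend psi gens psi_hom gens_gen t psi_t d x Hx) as [x' [Hx' Cx]].
  destruct (neg_conn_descend psi gens psi_hom gens_gen t psi_t d y Hy) as [y' [Hy' Cy]].
  destruct (ascending_normal_form psi A t asc (ginv x' ⋅ y')) as [p [b [q [Hb E]]]].
  assert (Ey : y' = x' ⋅ ginv (gexp t p) ⋅ b ⋅ gexp t q)
    by (replace y' with (x' ⋅ (ginv x' ⋅ y')) at 1 by gsimpl;
        rewrite E; unfold nf; gsimpl).
  assert (Hpq : psi y' = psi x' + Z.of_nat q - Z.of_nat p).
  { rewrite Ey, !psi_hom, (zhomV _ psi_hom), !(zhom_gexp _ psi_hom), psi_t, (A_ker b Hb).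
    lia. }
  apply (rt_trans _ _ _ x'); [exact Cx|].
  apply (rt_trans _ _ _ y'); [|now apply neg_conn_sym].
  assert (Hdown : psi (x' ⋅ ginv (gexp t p)) = psi x' - Z.of_nat p)
    by (rewrite psi_hom, (zhomV _ psi_hom), (zhom_gexp _ psi_hom), psi_t; lia).
  apply (rt_trans _ _ _ (x' ⋅ ginv (gexp t p))).
  { apply (neg_conn_gexpV psi gens psi_hom d t psi_t); [|exact Hx'].
    intros g Hg. apply Hd; auto. now right; left. }
  apply (rt_trans _ _ _ (x' ⋅ ginv (gexp t p) ⋅ b)); [apply A_conn; [exact Hb|lia]|].
  rewrite Ey. apply (neg_conn_gexp psi gens psi_hom d t psi_t);
    [|rewrite psi_hom, (A_ker b Hb); lia].
  intros g Hg. apply Hd; [now left|exact Hg].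
Qed.

Definition conj_span {G : Group} (u : G) (L : list G) (K : nat) : G -> Prop :=
  gen (fun y => exists j l,
         (j <= K)%nat /\ In l L /\ y = ginv (gexp u j) ⋅ l ⋅ gexp u j).

Lemma conj_span_mono {G : Group} (u : G) L K K' y :
  (K <= K')%nat -> conj_span u L K y -> conj_span u L K' y.
Proof.
  intro HK. apply gen_mono. intros x [j [l [Hj [Hl E]]]].
  exists j, l. repeat split; auto. lia.
Qed.

Lemma conj_span_fg {G : Group} (u : G) L K : fg_subgroup (conj_span u L K).
Proof.
  split; [apply gen_is_subgroup|].
  exists (flat_map (fun j => map (fun l => ginv (gexp u j) ⋅ l ⋅ gexp u j) L)
                   (seq 0 (S K))).
  apply gen_ext. intro x. rewrite in_flat_map. split.
  - intros [j [l [Hj [Hl ->]]]]. exists j. split; [apply in_seq; lia|].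
    apply in_map_iff. now exists l.
  - intros [j [Hj Hx]]. apply in_seq in Hj. apply in_map_iff in Hx.
    destruct Hx as [l [<- Hl]]. exists j, l. repeat split; auto. lia.
Qed.

Section PathLifting.
Context {G : Group} (psi : G -> Z) (u : G) (L : list G).
Hypothesis psi_hom : is_Zhom psi.
Hypothesis psi_u : psi u = 1.
Hypothesis L_ker : forall l, In l L -> psi l = 0.

Notation C := (clos_refl_trans G (neg_step (u :: L) psi)).

(* Moving a vertex x of height -k to height 0 by x u^k turns every edge of the
   negative half into a conjugate u^-k l u^k or the identity. *)
Definition lift_to_zero (x : G) : G := x ⋅ gexp u (Z.to_nat (- psi x)).

Lemma lift_to_zero_mul x s : In s (u :: L) -> psi x <= 0 -> psi (x ⋅ s) <= 0 ->
  exists K, conj_span u L K (ginv (lift_to_zero x) ⋅ lift_to_zero (x ⋅ s)).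
Proof.
  intros [<-|Hs] Hx Hxs; unfold lift_to_zero; rewrite psi_hom in *.
  - exists 0%nat.
    replace (Z.to_nat (- psi x)) with (S (Z.to_nat (- (psi x + psi u)))) by lia.
    rewrite gexpSl.
    replace (ginv (x ⋅ (u ⋅ gexp u _)) ⋅ (x ⋅ u ⋅ gexp u _)) with (@gone G)
      by gsimpl.
    apply gen_one.
  - rewrite (L_ker s Hs), Z.add_0_r. exists (Z.to_nat (- psi x)).
    apply gen_base. exists (Z.to_nat (- psi x)), s. repeat split; auto. gsimpl.
Qed.

Lemma lift_to_zero_path x y : C x y ->
  exists K, conj_span u L K (ginv (lift_to_zero x) ⋅ lift_to_zero y).
Proof.
  intro Cxy.
  induction Cxy as [x y [Hx [Hy [s [Hs [->| ->]]]]]|x|x y z _ [K1 IH1] _ [K2 IH2]].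
  - now apply lift_to_zero_mul.
  - destruct (lift_to_zero_mul y s Hs Hy Hx) as [K HK]. exists K.
    replace (ginv (lift_to_zero (y ⋅ s)) ⋅ lift_to_zero y)
      with (ginv (ginv (lift_to_zero y) ⋅ lift_to_zero (y ⋅ s))) by gsimpl.
    now apply gen_inv.
  - exists 0%nat. rewrite gmulVl. apply gen_one.
  - exists (Nat.max K1 K2).
    replace (ginv (lift_to_zero x) ⋅ lift_to_zero z) with
      ((ginv (lift_to_zero x) ⋅ lift_to_zero y) ⋅
       (ginv (lift_to_zero y) ⋅ lift_to_zero z))
      by gsimpl.
    apply gen_mul; [apply (conj_span_mono u L K1)|apply (conj_span_mono u L K2)];
      auto; lia.
Qed.

Lemma Sigma_conj_span :
  cayley_neg_connected (u :: L) psi ->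
  exists K, forall l, In l L -> conj_span u L K (u ⋅ l ⋅ ginv u).
Proof.
  intro connected. apply list_uniform_index; [intros; eapply conj_span_mono; eauto|].
  intros l Hl.
  assert (Hl0 : psi (u ⋅ l ⋅ ginv u) = 0)
    by (rewrite !psi_hom, (zhomV _ psi_hom), (L_ker l Hl); lia).
  destruct (lift_to_zero_path gone (u ⋅ l ⋅ ginv u)) as [K HK].
  { apply connected; [rewrite (zhom1 _ psi_hom)|rewrite Hl0]; lia. }
  exists K.
  replace (u ⋅ l ⋅ ginv u)
    with (ginv (lift_to_zero gone) ⋅ lift_to_zero (u ⋅ l ⋅ ginv u)); [exact HK|].
  unfold lift_to_zero. rewrite Hl0, (zhom1 _ psi_hom). cbn [gexp]. gsimpl.
Qed.

End PathLifting.

Section KernelGenerators.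
Context {G : Group} (phi : G -> Z) (t : G).
Hypothesis phi_hom : is_Zhom phi.
Hypothesis phi_t : phi t = 1.

Lemma zhom_shift_to_ker g : phi (g ⋅ ginv (gzexp t (phi g))) = 0.
Proof. rewrite phi_hom, (zhomV _ phi_hom), (zhom_gzexp _ phi_hom), phi_t. lia. Qed.

Lemma gen_ker_t g : gen (fun x => phi x = 0 \/ x = t) g.
Proof.
  replace g with ((g ⋅ ginv (gzexp t (phi g))) ⋅ gzexp t (phi g)) by gsimpl.
  apply gen_mul; [apply gen_base; left; apply zhom_shift_to_ker|].
  generalize (gzexp_gen t (phi g)). apply gen_mono. now right.
Qed.

Lemma ker_generators_with_t (Lg : list G) : (forall g, gen (fun x => In x Lg) g) ->
  exists L, (forall l, In l L -> phi l = 0) /\ forall g, gen (fun x => In x (t :: L)) g.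
Proof.
  intro Lg_gen. exists (map (fun x => x ⋅ ginv (gzexp t (phi x))) Lg). split.
  - intros l Hl. apply in_map_iff in Hl. destruct Hl as [x [<- _]]. apply zhom_shift_to_ker.
  - intro g. generalize (Lg_gen g). apply gen_min; [apply gen_is_subgroup|].
    intros x Hx.
    replace x with ((x ⋅ ginv (gzexp t (phi x))) ⋅ gzexp t (phi x)) by gsimpl.
    apply gen_mul.
    { apply gen_base, or_intror.
      exact (in_map (fun y => y ⋅ ginv (gzexp t (phi y))) _ _ Hx). }
    generalize (gzexp_gen t (phi x)). apply gen_mono. intros y ->. now left.
Qed.

End KernelGenerators.

Lemma ascending_of_Sigma {G : Group} (phi : G -> Z) t :
  is_Zhom phi -> phi t = 1 -> (exists Lg : list G, forall g, gen (fun x => In x Lg) g) ->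
  in_Sigma phi -> exists B, ascending_HNN phi B t.
Proof.
  intros phi_hom phi_t [Lg Lg_gen] Sigma.
  destruct (ker_generators_with_t phi t phi_hom phi_t Lg Lg_gen) as [L [L_ker gens]].
  destruct (Sigma_conj_span phi t L phi_hom phi_t L_ker (Sigma _ gens)) as [K HK].
  exists (conj_span t L K). split.
  - apply conj_span_fg.
  - apply gen_min; [apply ker_subgroup, phi_hom|]. intros x [j [l [_ [Hl ->]]]].
    rewrite !phi_hom, (zhomV _ phi_hom), (L_ker l Hl). lia.
  - exact phi_t.
  - apply (gen_hom_closed _ _ _ (conj_hom t) (gen_is_subgroup _)).
    intros x [[|j] [l [Hj [Hl ->]]]].
    + replace (t ⋅ (ginv (gexp t 0) ⋅ l ⋅ gexp t 0) ⋅ ginv t)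
        with (t ⋅ l ⋅ ginv t) by (cbn [gexp]; gsimpl).
      exact (HK l Hl).
    + apply gen_base. exists j, l. repeat split; [lia|exact Hl|]. cbn [gexp]. gsimpl.
  - intro g. generalize (gens g). apply gen_mono. intros x [<-|Hx]; [now right|left].
    apply gen_base. exists 0%nat, x. repeat split; [lia|exact Hx|]. cbn [gexp]. gsimpl.
Qed.

Lemma Sigma_neg_conj_closed {G : Group} (phi : G -> Z) A t :
  is_Zhom phi -> ascending_HNN phi A t -> in_Sigma (fun g => - phi g) ->
  forall a, A a -> A (ginv t ⋅ a ⋅ t).
Proof.
  intros phi_hom [[A_sub [LA A_LA]] A_ker phi_t A_conj A_gen] Sigma.
  assert (psi_hom : is_Zhom (fun g => - phi g)) by (intros a b; rewrite phi_hom; lia).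
  assert (psi_tV : - phi (ginv t) = 1) by (rewrite (zhomV _ phi_hom); lia).
  assert (LA_ker : forall l, In l LA -> - phi l = 0)
    by (intros l Hl; rewrite (A_ker l); [lia|apply A_LA, gen_base, Hl]).
  assert (gens : forall g, gen (fun x => In x (ginv t :: LA)) g).
  { intro g. generalize (A_gen g). apply gen_min; [apply gen_is_subgroup|].
    intros x [Hx| ->].
    - apply A_LA in Hx. revert Hx. apply gen_mono. now right.
    - generalize (gen_inv _ _
        (gen_base (fun x => In x (ginv t :: LA)) _ (or_introl eq_refl))).
      now rewrite ginvK. }
  destruct (Sigma_conj_span _ (ginv t) LA psi_hom psi_tV LA_ker (Sigma _ gens)) as [K HK].
  assert (span_A : forall y, conj_span (ginv t) LA K y -> A y).
  { apply gen_min; [exact A_sub|]. intros x [j [l [_ [Hl ->]]]].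
    rewrite gexpV, ginvK. apply (conj_gexp_closed A t A_conj), A_LA, gen_base, Hl. }
  intros a Ha. apply A_LA in Ha.
  replace (ginv t ⋅ a ⋅ t) with (ginv t ⋅ a ⋅ ginv (ginv t)) by gsimpl.
  revert a Ha. apply (gen_hom_closed _ _ _ (conj_hom (ginv t)) A_sub).
  intros l Hl. rewrite ginvK. apply span_A. rewrite <- (ginvK t) at 3. apply HK, Hl.
Qed.

Lemma ascending_ker_eq {G : Group} (phi : G -> Z) A t :
  is_Zhom phi -> ascending_HNN phi A t -> (forall a, A a -> A (ginv t ⋅ a ⋅ t)) ->
  forall g, phi g = 0 <-> A g.
Proof.
  intros phi_hom asc A_conjV g. split; [|apply (asc_ker _ _ _ asc)].
  intro Hg. destruct (ascending_normal_form phi A t asc g) as [p [b [q [Hb ->]]]].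
  rewrite (zhom_nf t A phi phi_hom (asc_t _ _ _ asc) (asc_ker _ _ _ asc) p b q Hb) in Hg.
  replace q with p by lia. unfold nf.
  replace (ginv (gexp t p) ⋅ b ⋅ gexp t p)
    with (gexp (ginv t) p ⋅ b ⋅ ginv (gexp (ginv t) p)) by (rewrite gexpV; gsimpl).
  apply (conj_gexp_closed A (ginv t)); [|exact Hb].
  intros a Ha. rewrite ginvK. auto.
Qed.

Lemma ker_ascending {G : Group} (phi : G -> Z) t :
  is_Zhom phi -> phi t = 1 -> fg_subgroup (fun g => phi g = 0) ->
  ascending_HNN phi (fun g => phi g = 0) t.
Proof.
  intros phi_hom phi_t ker_fg. split; auto.
  - intros b Hb. rewrite !phi_hom, (zhomV _ phi_hom), Hb. lia.
  - apply gen_ker_t; assumption.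
Qed.

Lemma grank0_iff_Sigma {G : Group} (phi : G -> Z) t :
  is_Zhom phi -> phi t = 1 -> (exists Lg : list G, forall g, gen (fun x => In x Lg) g) ->
  grank_is phi 0 <-> in_Sigma phi.
Proof.
  intros phi_hom phi_t G_fg. split.
  - intro grank0. destruct (ascending_of_grank0 phi grank0) as [B [u asc]].
    exact (ascending_in_Sigma phi B u phi_hom asc).
  - intro Sigma. destruct (ascending_of_Sigma phi t phi_hom phi_t G_fg Sigma) as [B asc].
    exact (grank0_of_ascending phi B t phi_hom asc).
Qed.

Theorem lemma3p2 (G : Group) (phi : G -> Z) :
  finitely_presented G -> epi_Z phi ->
  (grank_is phi 0 <-> in_Sigma phi) /\
  ((grank_is phi 0 /\ grank_is (fun g => - phi g) 0) <->
     fg_subgroup (fun g => phi g = 0)).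
Proof.
  intros [n [s [rels [_ [s_gen _]]]]] [phi_hom phi_onto].
  assert (G_fg : exists Lg : list G, forall g, gen (fun x => In x Lg) g).
  { exists (map s (seq 0 n)). intro g. generalize (s_gen g). apply gen_mono.
    intros x [i [Hi ->]]. apply in_map, in_seq. lia. }
  assert (psi_hom : is_Zhom (fun g => - phi g)) by (intros a b; rewrite phi_hom; lia).
  destruct (phi_onto 1) as [t phi_t]. destruct (phi_onto (-1)) as [t' phi_t'].
  split; [exact (grank0_iff_Sigma phi t phi_hom phi_t G_fg)|split].
  - intros [grank0 grank0_neg].
    destruct (ascending_of_grank0 phi grank0) as [A [u asc]].
    assert (Sigma_neg : in_Sigma (fun g => - phi g))
      by (apply (grank0_iff_Sigma _ t' psi_hom); [lia|exact G_fg|exact grank0_neg]).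
    apply (fg_subgroup_ext A); [|exact (asc_fg _ _ _ asc)].
    intro g. symmetry. apply (ascending_ker_eq phi A u phi_hom asc).
    exact (Sigma_neg_conj_closed phi A u phi_hom asc Sigma_neg).
  - intro ker_fg. split.
    + apply (grank0_of_ascending phi (fun g => phi g = 0) t phi_hom).
      exact (ker_ascending phi t phi_hom phi_t ker_fg).
    + apply (grank0_of_ascending _ (fun g => - phi g = 0) t' psi_hom).
      apply (ker_ascending _ t' psi_hom); [lia|].
      apply (fg_subgroup_ext (fun g => phi g = 0)); [intro g; lia|exact ker_fg].
Qed.
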